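(* Let $\mathbb{R}^2=\bigcup_{a=1}^{n}R_a$ and $\mathbb{R}^2=\bigcup_{b=1}^{n'}R'_b$ be two parabolic subdivisions of $\mathbb{R}^2$. Then the family of all intersections $R_a\cap R'_b$ that have nonempty interior is again a parabolic subdivision of $\mathbb{R}^2$.
   Context: A parabola is a set $\{(u,v): au^2+buv+cv^2+du+ev+f=0\}$ with $(a,b,c,d,e,f)\neq 0$ and $b^2-4ac=0$ (this includes lines and the empty set). A parabolic region is a set $\{s\in\mathbb{R}^2: a_is_1^2+b_is_1s_2+c_is_2^2+d_is_1+e_is_2+f_i\le 0,\ i=1,\dots,k\}$ with each $(a_i,\dots,f_i)\neq 0$ and $b_i^2-4a_ic_i=0$. A parabolic subdivision of a convex set $R$ is a finite union $R=\bigcup_i R_i$ of parabolic regions such that for $j\ne k$, $R_j\cap R_k$ is empty or contained in a parabola. *)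

From HB Require Import structures.
From mathcomp Require Import all_boot all_order all_algebra.
From mathcomp Require Import all_classical all_reals all_analysis.
Set Implicit Arguments. Unset Strict Implicit. Unset Printing Implicit Defensive.
Import Order.TTheory GRing.Theory Num.Theory.
Import numFieldNormedType.Exports.
Local Open Scope classical_set_scope.
Local Open Scope ring_scope.

Record conic (R : realType) := Conic {
  ca : R; cb : R; cc : R; cd : R; ce : R; cf : R }.

Definition conic_eval (R : realType) (q : conic R) (s : R * R) : R :=
  ca q * s.1 ^+ 2 + cb q * s.1 * s.2 + cc q * s.2 ^+ 2
  + cd q * s.1 + ce q * s.2 + cf q.

Definition parabolic_conic (R : realType) (q : conic R) : Prop :=
  ~ (ca q = 0 /\ cb q = 0 /\ cc q = 0 /\ cd q = 0 /\ ce q = 0 /\ cf q = 0)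
  /\ cb q ^+ 2 - 4%:R * ca q * cc q = 0.

(* a parabola (including lines and the empty set) *)
Definition parabola (R : realType) (P : set (R * R)) : Prop :=
  exists q : conic R, parabolic_conic q /\ P = [set s | conic_eval q s = 0].

Definition parabolic_region (R : realType) (A : set (R * R)) : Prop :=
  exists (k : nat) (q : 'I_k -> conic R),
    (forall i, parabolic_conic (q i)) /\
    A = [set s | forall i, conic_eval (q i) s <= 0].

Definition parabolic_subdivision (R : realType) (I : Type) (C : set (R * R))
    (D : set I) (F : I -> set (R * R)) : Prop :=
  [/\ finite_set D,
      C = \bigcup_(i in D) F i,
      (forall i, D i -> parabolic_region (F i)) &
      (forall i j, D i -> D j -> i <> j ->
         F i `&` F j = set0 \/
         exists P, parabola P /\ F i `&` F j `<=` P)].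

From HB Require Import structures.
From mathcomp Require Import all_boot all_order all_algebra.
From mathcomp Require Import all_classical all_reals all_analysis.
Set Implicit Arguments.
Unset Strict Implicit.
Unset Printing Implicit Defensive.

Import Order.TTheory GRing.Theory Num.Theory.
Import numFieldNormedType.Exports.
Local Open Scope classical_set_scope.
Local Open Scope ring_scope.

(* Parabolic regions are closed (finite intersections of sublevel sets of
   polynomials) and stable under intersection, so the pairwise intersections
   form a finite closed cover of the plane by parabolic regions, any two of
   which meet inside a parabola because their ambient pieces do.  Dropping the
   pieces with empty interior keeps a cover: the points left uncovered would
   form a nonempty open set covered by finitely many closed sets, and one of
   these closed sets would then have nonempty interior. *)

Lemma conic_eval_continuous (R : realType) (q : conic R) :
  continuous (conic_eval q).
Proof.
rewrite /conic_eval => x.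
by repeat first [apply: cvgD | apply: cvgM | exact: cvg_cst
                | exact: cvg_fst | exact: cvg_snd].
Qed.

Lemma parabolic_region_closed (R : realType) (A : set (R * R)) :
  parabolic_region A -> closed A.
Proof.
case=> k [q [_ ->]].
have -> : [set s | forall i, conic_eval (q i) s <= 0] =
    \bigcap_(i in setT) (conic_eval (q i) @^-1` [set r : R | r <= 0]).
  by apply/seteqP; split=> s /= qs i; [move=> _ |]; apply: qs.
apply: closed_bigI => i _.
apply: (continuous_closedP _).1 (@conic_eval_continuous _ (q i)) _ _.
exact: closed_le.
Qed.

Lemma parabolic_regionI (R : realType) (A B : set (R * R)) :
  parabolic_region A -> parabolic_region B -> parabolic_region (A `&` B).
Proof.
case=> k1 [q1 [q1P ->]] [k2 [q2 [q2P ->]]].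
pose q (i : 'I_(k1 + k2)) :=
  match fintype.split i with inl j => q1 j | inr j => q2 j end.
exists (k1 + k2)%N, q; split; first by move=> i; rewrite /q; case: fintype.split.
apply/seteqP; split=> s /=.
  by move=> [q1s q2s] i; rewrite /q; case: fintype.split.
move=> qs; split=> j.
  by have := qs (lshift k2 j); rewrite /q (unsplitK (inl _ j)).
by have := qs (rshift k1 j); rewrite /q (unsplitK (inr _ j)).
Qed.

Lemma finite_closed_cover_nbhs (T : topologicalType) (I : eqType)
    (S : I -> set T) (s : seq I) (V : set T) :
  (forall i, closed (S i)) -> open V -> V !=set0 ->
  (forall y, V y -> exists2 i, i \in s & S i y) ->
  exists i y, [/\ i \in s, V y & nbhs y (S i)].
Proof.
elim: s V => [|i0 s IH] V Sclosed Vopen [x Vx] Vcover.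
  by have [i] := Vcover x Vx; rewrite in_nil.
have [[y [Vy S0y]]|] := pselect (exists y, V y /\ ~ S i0 y); last first.
  move=> VS0; exists i0, x; split=> //; first exact: mem_head.
  apply: filterS (open_nbhs_nbhs (conj Vopen Vx)) => z Vz.
  by apply: contrapT => S0z; apply: VS0; exists z.
(* Otherwise recurse on the open set [V] minus [S i0], which is covered by [s]. *)
have [||| i [z [si [Vz _] Snbhs]]] := IH (V `&` ~` S i0) Sclosed.
- exact/openI/closed_openC.
- by exists y.
- move=> z [Vz S0z]; have [i] := Vcover z Vz.
  rewrite in_cons => /orP[/eqP-> //|si] Siz.
  by exists i.
by exists i, z; rewrite in_cons si orbT.
Qed.

Lemma bigcup_interior_closed_cover (T : topologicalType) (I : finType)
    (S : I -> set T) :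
  (forall i, closed (S i)) -> \bigcup_(i in setT) S i = setT ->
  \bigcup_(i in [set i | interior (S i) !=set0]) S i = setT.
Proof.
move=> Sclosed Scover; apply/seteqP; split=> // x _.
apply: contrapT => Ux.
set U := \bigcup_(i in _) S i in Ux *.
have Uclosed : closed U by apply: closed_bigcup => //; exact: finite_finset.
have [||i [y [_ nUy Snbhs]]] :=
  finite_closed_cover_nbhs (s := index_enum I) Sclosed (closed_openC Uclosed).
- by exists x.
- move=> y _; have : setT y by [].
  by rewrite -Scover => -[i _ Siy]; exists i; first exact: mem_index_enum.
by apply: nUy; exists i; [exists y | exact: nbhs_singleton].
Qed.

Definition meet_in_parabola (R : realType) (A B : set (R * R)) : Prop :=
  A `&` B = set0 \/ exists P, parabola P /\ A `&` B `<=` P.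

Lemma meet_in_parabolaS (R : realType) (A B A' B' : set (R * R)) :
  A' `<=` A -> B' `<=` B -> meet_in_parabola A B -> meet_in_parabola A' B'.
Proof.
move=> A'A B'B; have sub : A' `&` B' `<=` A `&` B by apply: setISS.
case=> [AB0|[P [Pparab ABP]]]; first by left; rewrite -subset0 -AB0.
by right; exists P; split=> //; apply: subset_trans ABP.
Qed.

Theorem proposition2 (R : realType) (n n' : nat)
    (Ra : 'I_n -> set (R * R)) (Rb : 'I_n' -> set (R * R)) :
  parabolic_subdivision setT setT Ra ->
  parabolic_subdivision setT setT Rb ->
  parabolic_subdivision setT
    [set p : 'I_n * 'I_n' | interior (Ra p.1 `&` Rb p.2) !=set0]
    (fun p => Ra p.1 `&` Rb p.2).
Proof.
move=> [_ coverA regA meetA] [_ coverB regB meetB].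
have reg (p : 'I_n * 'I_n') : parabolic_region (Ra p.1 `&` Rb p.2).
  exact: parabolic_regionI (regA _ I) (regB _ I).
split.
- exact: finite_finset.
- rewrite bigcup_interior_closed_cover // => [p|].
    exact: parabolic_region_closed.
  apply/seteqP; split=> // x _.
  have [a _ Rax] : (\bigcup_(a in setT) Ra a) x by rewrite -coverA.
  have [b _ Rbx] : (\bigcup_(b in setT) Rb b) x by rewrite -coverB.
  by exists (a, b).
- by move=> p _.
- move=> [a b] [a' b'] _ _ /=.
  case: (eqVneq a a') => [<- ab_neq | /eqP a_neq _].
    have b_neq : b <> b' by move=> eb; apply: ab_neq; rewrite eb.
    by apply: meet_in_parabolaS (meetB _ _ I I b_neq); apply: subIsetr.
  by apply: meet_in_parabolaS (meetA _ _ I I a_neq); apply: subIsetl.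
Qed.
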